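(* Let $\mathcal A,\mathcal B$ be modal categories, $\Sigma$ a nonempty set, and $F:\mathcal A\to\mathcal B$ a concrete functor. Then $F$ preserves the interpretation of $\mathcal L^D_\Sigma$ if and only if it preserves the interpretation of the basic modal language $\mathcal L$. Here preserving $\mathcal L^D_\Sigma$ means: for every set $X$, every tuple $(A_a)_{a\in\Sigma}$ of objects of $\mathcal A_X$, every $V:\mathsf P\to\wp(X)$ and every $\varphi\in\mathcal L^D_\Sigma$, $[\![\varphi]\!]^V_{(A_a)_a}=[\![\varphi]\!]^V_{(FA_a)_a}$; and preserving $\mathcal L$ means $[\![\varphi]\!]^V_A=[\![\varphi]\!]^V_{FA}$ for all $A\in\mathcal A_X$, $V$, $\varphi\in\mathcal L$.
   Context: A modal category is a topological category $\mathcal A$ over $\mathbf{Set}$ (faithful forgetful functor, every structured source has exactly one initial lift, fibres $\mathcal A_X$ of objects over $X$) equipped with a concrete functor $(-)^+:\mathcal A\to\mathbf{CABAO}$, where $\mathbf{CABAO}$ has objects $(X,m)$, $m:\wp(X)\to\wp(X)$ arbitrary, and morphisms $f:(X,m)\to(Y,n)$ functions with $f^{-1}(n(T))\subseteq m(f^{-1}(T))$ for all $T$; write $A^+$ for the operator of $A$. A concrete functor commutes with forgetful functors. Fix a nonempty set $\mathsf P$ of propositional variables. $\mathcal L$: formulas $p\mid\varphi\wedge\psi\mid\neg\varphi\mid\Box\varphi$, with $[\![p]\!]^V_A=V(p)$, $\wedge\mapsto\cap$, $\neg\mapsto$ complement in $X$, $[\![\Box\varphi]\!]^V_A=A^+([\![\varphi]\!]^V_A)$.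 $\mathcal L^D_\Sigma$: formulas $p\mid\varphi\wedge\psi\mid\neg\varphi\mid\Box_a\varphi\mid K_ab$ for $a,b\in\Sigma$, interpreted on a tuple $(A_a)_{a\in\Sigma}$ in $\mathcal A_X$ with $V:\mathsf P\to\wp(X)$ by the Boolean clauses, $[\![\Box_a\varphi]\!]^V=A_a^+([\![\varphi]\!]^V)$, and $[\![K_ab]\!]^V=\{x\in X:\forall S\subseteq X\,(x\in A_b^+(S)\Rightarrow x\in A_a^+(S))\}$. *)

(* A concrete (amnestic) category over Set, presented as a category of
   structured sets: an object over X is a structure s : cstruct X, and a
   morphism (X,s) -> (Y,t) is a function f : X -> Y satisfying chom s t f
   (the forgetful functor is faithful by construction). *)

Definition initial_lift {S : Type -> Type}
  (hom : forall X Y, S X -> S Y -> (X -> Y) -> Prop)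
  {X I : Type} {Y : I -> Type} (t : forall i, S (Y i)) (f : forall i, X -> Y i)
  (s : S X) : Prop :=
  forall (Z : Type) (u : S Z) (g : Z -> X),
    hom Z X u s g <-> (forall i, hom Z (Y i) u (t i) (fun z => f i (g z))).

Definition topological {S : Type -> Type}
  (hom : forall X Y, S X -> S Y -> (X -> Y) -> Prop) : Prop :=
  forall (X I : Type) (Y : I -> Type) (t : forall i, S (Y i))
         (f : forall i, X -> Y i),
    exists! s : S X, initial_lift hom t f s.

Record ModalCat := {
  mstruct : Type -> Type;                      (* fibre A_X *)
  mhom : forall X Y, mstruct X -> mstruct Y -> (X -> Y) -> Prop;
  mhom_id : forall X (s : mstruct X), mhom X X s s (fun x => x);
  mhom_comp : forall X Y Z (s : mstruct X) (t : mstruct Y) (u : mstruct Z)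
                (f : X -> Y) (g : Y -> Z),
      mhom X Y s t f -> mhom Y Z t u g -> mhom X Z s u (fun x => g (f x));
  mtop : topological mhom;
  (* the concrete functor (-)^+ : A -> CABAO *)
  mplus : forall X, mstruct X -> (X -> Prop) -> (X -> Prop);
  mplus_hom : forall X Y (s : mstruct X) (t : mstruct Y) (f : X -> Y),
      mhom X Y s t f ->
      forall (T : Y -> Prop) (x : X),
        mplus Y t T (f x) -> mplus X s (fun y => T (f y)) x
}.

Arguments mhom {m X Y}.
Arguments mplus {m X}.

Record ConcreteFunctor (A B : ModalCat) := {
  fobj : forall X, mstruct A X -> mstruct B X;
  fhom : forall X Y (s : mstruct A X) (t : mstruct A Y) (f : X -> Y),
      @mhom A X Y s t f -> @mhom B X Y (fobj X s) (fobj Y t) f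
}.

Arguments fobj {A B} c {X} s.

Inductive form (P : Type) : Type :=
| FVar : P -> form P
| FAnd : form P -> form P -> form P
| FNeg : form P -> form P
| FBox : form P -> form P.

Arguments FVar {P}. Arguments FAnd {P}. Arguments FNeg {P}. Arguments FBox {P}.

Fixpoint sem {P : Type} {M : ModalCat} {X : Type} (s : mstruct M X)
  (V : P -> X -> Prop) (phi : form P) : X -> Prop :=
  match phi with
  | FVar p => V p
  | FAnd a b => fun x => sem s V a x /\ sem s V b x
  | FNeg a => fun x => ~ sem s V a x
  | FBox a => mplus s (sem s V a)
  end.

Inductive dform (P Sigma : Type) : Type :=
| DVar : P -> dform P Sigma
| DAnd : dform P Sigma -> dform P Sigma -> dform P Sigma
| DNeg : dform P Sigma -> dform P Sigma
| DBox : Sigma -> dform P Sigma -> dform P Sigma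
| DK : Sigma -> Sigma -> dform P Sigma.

Arguments DVar {P Sigma}. Arguments DAnd {P Sigma}. Arguments DNeg {P Sigma}.
Arguments DBox {P Sigma}. Arguments DK {P Sigma}.

Fixpoint semD {P Sigma : Type} {M : ModalCat} {X : Type}
  (As : Sigma -> mstruct M X) (V : P -> X -> Prop) (phi : dform P Sigma)
  : X -> Prop :=
  match phi with
  | DVar p => V p
  | DAnd a b => fun x => semD As V a x /\ semD As V b x
  | DNeg a => fun x => ~ semD As V a x
  | DBox i a => mplus (As i) (semD As V a)
  | DK i j => fun x => forall S : X -> Prop, mplus (As j) S x -> mplus (As i) S x
  end.

Definition preserves_L (P : Type) {A B : ModalCat} (F : ConcreteFunctor A B)
  : Prop :=
  forall (X : Type) (s : mstruct A X) (V : P -> X -> Prop) (phi : form P),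
    sem s V phi = sem (fobj F s) V phi.

Definition preserves_LD (P Sigma : Type) {A B : ModalCat}
  (F : ConcreteFunctor A B) : Prop :=
  forall (X : Type) (As : Sigma -> mstruct A X) (V : P -> X -> Prop)
         (phi : dform P Sigma),
    semD As V phi = semD (fun a => fobj F (As a)) V phi.

(* Both languages are built from Boolean connectives and the operators [A^+]
   (the atom [K_a b] is itself defined from [A_a^+] and [A_b^+]), so a concrete
   functor preserving the operator [A^+] of every object preserves both
   interpretations.  Conversely, each language can express [A^+(T)] for an
   arbitrary set [T] as the meaning of [Box p] under a valuation sending the
   variable [p] to [T], so preserving either interpretation forces [F] to
   preserve every operator [A^+]. *)

From Stdlib Require Import FunctionalExtensionality.

Definition preserves_plus {A B : ModalCat} (F : ConcreteFunctor A B) : Prop :=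
  forall (X : Type) (s : mstruct A X), mplus s = mplus (fobj F s).

Section PreservesPlus.

Variables (A B : ModalCat) (F : ConcreteFunctor A B).
Hypothesis HF : preserves_plus F.

Lemma preserves_plus_L (P : Type) : preserves_L P F.
Proof.
  intros X s V phi; induction phi as [p | a IHa b IHb | a IHa | a IHa]; simpl.
  - reflexivity.
  - rewrite IHa, IHb; reflexivity.
  - rewrite IHa; reflexivity.
  - rewrite IHa, HF; reflexivity.
Qed.

Lemma preserves_plus_LD (P Sigma : Type) : preserves_LD P Sigma F.
Proof.
  intros X As V phi; induction phi as [p | a IHa b IHb | a IHa | i a IHa | i j];
    simpl.
  - reflexivity.
  - rewrite IHa, IHb; reflexivity.
  - rewrite IHa; reflexivity.
  - rewrite IHa, HF; reflexivity.
  - rewrite !HF; reflexivity.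
Qed.

End PreservesPlus.

Lemma preserves_L_plus (P : Type) (A B : ModalCat) (F : ConcreteFunctor A B) :
  inhabited P -> preserves_L P F -> preserves_plus F.
Proof.
  intros [p] HF X s; apply functional_extensionality; intro T.
  exact (HF X s (fun _ => T) (FBox (FVar p))).
Qed.

Lemma preserves_LD_plus (P Sigma : Type) (A B : ModalCat)
  (F : ConcreteFunctor A B) :
  inhabited P -> inhabited Sigma -> preserves_LD P Sigma F -> preserves_plus F.
Proof.
  intros [p] [a] HF X s; apply functional_extensionality; intro T.
  exact (HF X (fun _ => s) (fun _ => T) (DBox a (DVar p))).
Qed.

Theorem theorem4 (P Sigma : Type) (hP : inhabited P) (hSigma : inhabited Sigma)
  (A B : ModalCat) (F : ConcreteFunctor A B) :
  preserves_LD P Sigma F <-> preserves_L P F.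
Proof.
  split; intro HF.
  - apply preserves_plus_L, (preserves_LD_plus P Sigma); assumption.
  - apply preserves_plus_LD, (preserves_L_plus P); assumption.
Qed.
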